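(* For $a,b,c\in(0,1]$, \[\min\{a,b\}=\min_{x,y\in\mathbb{R}_+}\ ax+by\quad\text{subject to}\quad x^2+y^2-2cxy=1.\]
   Context: $\mathbb{R}_+$ denotes the nonnegative reals. *)

From Stdlib Require Import Reals.
Open Scope R_scope.

Definition feasible (c x y : R) : Prop :=
  0 <= x /\ 0 <= y /\ x ^ 2 + y ^ 2 - 2 * c * x * y = 1.

(* On the feasible set (x + y)^2 = 1 + 2 (1 + c) x y >= 1, so x + y >= 1, and
   a x + b y >= min{a,b} (x + y) >= min{a,b}; the bound is attained at the
   vertex (1,0) or (0,1), whichever carries the smaller weight. *)
From Stdlib Require Import Reals Lra Psatz.
Open Scope R_scope.

Lemma feasible_1_0 (c : R) : feasible c 1 0.
Proof. unfold feasible; repeat split; [lra | lra | ring]. Qed.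

Lemma feasible_0_1 (c : R) : feasible c 0 1.
Proof. unfold feasible; repeat split; [lra | lra | ring]. Qed.

Lemma feasible_sum_ge1 (c x y : R) : -1 <= c -> feasible c x y -> 1 <= x + y.
Proof.
  intros hc [hx [hy he]].
  assert (hsq : 1 <= (x + y) ^ 2).
  { replace ((x + y) ^ 2) with (1 + 2 * (1 + c) * (x * y)) by lra.
    assert (0 <= (1 + c) * (x * y)) by (apply Rmult_le_pos; nra).
    lra. }
  nra.
Qed.

Lemma Rmin_mul_sum_le (a b x y : R) :
  0 <= x -> 0 <= y -> Rmin a b * (x + y) <= a * x + b * y.
Proof.
  intros hx hy.
  pose proof (Rmin_l a b); pose proof (Rmin_r a b).
  nra.
Qed.

Lemma Rmin_attained_on_feasible (a b c : R) :
  exists x y : R, feasible c x y /\ a * x + b * y = Rmin a b.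
Proof.
  apply Rmin_case.
  - exists 1, 0; split; [apply feasible_1_0 | ring].
  - exists 0, 1; split; [apply feasible_0_1 | ring].
Qed.

Lemma Rmin_le_on_feasible (a b c x y : R) :
  0 <= a -> 0 <= b -> -1 <= c -> feasible c x y -> Rmin a b <= a * x + b * y.
Proof.
  intros ha hb hc hf.
  pose proof (feasible_sum_ge1 _ _ _ hc hf) as hsum.
  destruct hf as [hx [hy _]].
  pose proof (Rmin_mul_sum_le a b x y hx hy).
  assert (0 <= Rmin a b) by (apply Rmin_glb; assumption).
  nra.
Qed.

Theorem lemma3 (a b c : R) (ha : 0 < a <= 1) (hb : 0 < b <= 1) (hc : 0 < c <= 1) :
  (exists x y : R, feasible c x y /\ a * x + b * y = Rmin a b) /\
  (forall x y : R, feasible c x y -> Rmin a b <= a * x + b * y).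
Proof.
  split.
  - apply Rmin_attained_on_feasible.
  - intros x y; apply Rmin_le_on_feasible; lra.
Qed.
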